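(* Let $k > r \geq 2$ be integers and $F$ a graph with $f$ vertices and chromatic number $\chi(F)=k$. For every $\epsilon>0$ there is $n_0$, depending on $k,r,f,\epsilon$, such that for all $n\ge n_0$, \[ \mathrm{ex}_r ( n , F^+ ) < \mathrm{ex}_r ( n , K_{k}^+ ) + \epsilon n^r. \]
   Context: For a graph $G$, its $r$-uniform expansion $G^+$ is obtained by replacing each edge $e$ of $G$ by $e\cup S_e$, where the $S_e$ are sets of $r-2$ new vertices not in $V(G)$, pairwise disjoint for distinct edges (for $r=2$, $G^+=G$). $\mathrm{ex}_r(n,G^+)$ is the maximum number of edges in an $n$-vertex $r$-uniform hypergraph with no subhypergraph isomorphic to $G^+$. $K_k$ is the complete graph on $k$ vertices. *)

From mathcomp Require Import all_boot all_order all_algebra.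
From mathcomp Require Import reals.
Set Implicit Arguments. Unset Strict Implicit. Unset Printing Implicit Defensive.

Definition hypergraph (T : finType) := {set {set T}}.

Definition is_graph (T : finType) (G : hypergraph T) : bool :=
  [forall e in G, #|e| == 2].

Definition uniform (r : nat) (T : finType) (H : hypergraph T) : bool :=
  [forall e in H, #|e| == r].

Definition contains (T1 T2 : finType) (H1 : hypergraph T1) (H2 : hypergraph T2)
  : bool :=
  [exists phi : {ffun T1 -> T2},
     injectiveb phi && [forall e in H1, (phi @: e) \in H2]].

(* The r-uniform expansion G^+ of a graph G on V: vertex set
   V + (edges of G) x 'I_(r-2); the edge e becomes e together with the r-2
   new vertices (e, 0), ..., (e, r-3). *)
Definition exp_vertex (V : finType) (G : hypergraph V) (r : nat) : finType :=
  (V + ({e : {set V} | e \in G} * 'I_(r - 2)))%type.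

Definition expansion (r : nat) (V : finType) (G : hypergraph V)
  : hypergraph (exp_vertex G r) :=
  [set ((@inl V _) @: val e) :|:
       [set (@inr V _ (e, i)) | i : 'I_(r - 2)]
   | e : {e : {set V} | e \in G}].

Definition ex (r n : nat) (T : finType) (H : hypergraph T) : nat :=
  \max_(E : hypergraph 'I_n | uniform r E && ~~ contains H E) #|E|.

Definition complete_graph (k : nat) : hypergraph 'I_k :=
  [set e : {set 'I_k} | #|e| == 2].

Definition colorable (V : finType) (G : hypergraph V) (k : nat) : Prop :=
  exists c : V -> 'I_k, forall u v : V, [set u; v] \in G -> c u != c v.

Definition chromatic_number_is (V : finType) (G : hypergraph V) (k : nat) : Prop :=
  colorable G k /\ forall j, j < k -> ~ colorable G j.

(* Supersaturation: pick m where the density ex(m, K_k^+) / C(m, r) is within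
   eps/2 of its infimum; averaging over the m-subsets of an r-graph with
   ex(n, K_k^+) + eps n^r edges then yields at least c n^v copies of K_k^+,
   v = |V(K_k^+)|.  By Erdos' theorem on complete v-partite v-graphs these
   copies, seen as maps V(K_k^+) -> [n], contain a whole box of maps
   x |-> T_x with every T_x larger than |V(F^+)|, and the T_x are pairwise
   disjoint since every map of the box is injective.  A proper k-colouring
   of F induces a map F^+ -> K_k^+ sending edges injectively onto edges;
   sending each vertex of F^+ to its own point of T_(its image) embeds F^+. *)

From mathcomp Require Import all_boot all_order all_algebra.
From mathcomp Require Import reals.
From mathcomp Require Import zify ring lra.
Import Order.TTheory GRing.Theory Num.Theory.
Set Implicit Arguments. Unset Strict Implicit. Unset Printing Implicit Defensive.

Lemma double_count (I J : finType) (A : {set I}) (B : {set J}) (P : I -> J -> bool) :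
  \sum_(i in A) #|[set j in B | P i j]| = \sum_(j in B) #|[set i in A | P i j]|.
Proof.
under eq_bigr do rewrite -sum1dep_card.
rewrite (exchange_big_dep (mem B)) /=; last by move=> i j _ /andP[].
by apply: eq_bigr => j jB; rewrite -sum1dep_card; apply: eq_bigl => i; rewrite jB.
Qed.

Lemma card_supsets (T : finType) (A : {set T}) m : #|A| <= m ->
  #|[set S : {set T} | A \subset S & #|S| == m]| = 'C(#|T| - #|A|, m - #|A|).
Proof.
move=> Am; rewrite -[#|T|](cardsC A) addKn -cards_draws.
have setUK (S : {set T}) : S \subset ~: A -> (A :|: S) :\: A = S.
  by rewrite -disjoints_subset setDUl setDv set0U => /setDidPl.
rewrite -[RHS](@card_in_imset _ _ (setU A)); last first.
  move=> S1 S2; rewrite !inE => /andP[/setUK eq1 _] /andP[/setUK eq2 _] eq12.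
  by rewrite -eq1 -eq2 eq12.
apply: eq_card => S; rewrite inE; apply/andP/imsetP => [[AS /eqP cS] | [S' + ->]].
  exists (S :\: A); last by rewrite -{1}(setID S A) (setIidPr AS).
  by rewrite inE subsetDr cardsD (setIidPr AS) cS eqxx.
rewrite inE subsetUl => /andP[S'A /eqP cS']; split=> //.
move: S'A; rewrite -disjoints_subset disjoint_sym => /disjoint_setI0 AS'0.
by rewrite cardsU AS'0 cards0 subn0 cS' subnKC.
Qed.

Lemma mul_bin_sub n m v : v <= m -> m <= n ->
  'C(n, m) * 'C(m, v) = 'C(n, v) * 'C(n - v, m - v).
Proof.
move=> vm mn; have Cnvmv := bin_fact (leq_sub2r v mn).
rewrite (_ : n - v - (m - v) = n - m) in Cnvmv; last by lia.
apply/eqP; rewrite -(eqn_pmul2r (fact_gt0 v)) -(eqn_pmul2r (fact_gt0 (m - v))).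
rewrite -(eqn_pmul2r (fact_gt0 (n - m))); apply/eqP.
transitivity ('C(n, m) * ('C(m, v) * (v`! * (m - v)`!)) * (n - m)`!); first by ring.
rewrite (bin_fact vm) -mulnA (bin_fact mn) -(bin_fact (leq_trans vm mn)) -Cnvmv; ring.
Qed.

Lemma bin_leq_expn n r : 'C(n, r) <= n ^ r.
Proof.
apply: leq_trans (leq_pmulr _ (fact_gt0 r)) _.
rewrite bin_ffact ffact_prod -[X in _ <= n ^ X]card_ord -prod_nat_const.
by apply: leq_prod => i _; rewrite leq_subr.
Qed.

Lemma expn_leq_bin n v : 2 * v < n -> n ^ v <= 2 ^ v * (v`! * 'C(n, v)).
Proof.
move=> vn; rewrite [v`! * _]mulnC bin_ffact ffact_prod.
rewrite -[X in _ ^ X <= _]card_ord -[X in _ <= 2 ^ X * _]card_ord -!prod_nat_const.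
rewrite -big_split /=; apply: leq_prod => i _.
have := ltn_ord i; lia.
Qed.

Definition embeddings (T : finType) (H : hypergraph T) n (E : hypergraph 'I_n) :
  {set {ffun T -> 'I_n}} :=
  [set phi : {ffun T -> 'I_n} | injectiveb phi && [forall e in H, (phi @: e) \in E]].

Definition trace n (E : hypergraph 'I_n) (S : {set 'I_n}) : hypergraph 'I_n :=
  [set h in E | h \subset S].

Lemma card_uniform r (T : finType) (E : hypergraph T) e :
  uniform r E -> e \in E -> #|e| = r.
Proof. by move=> /forallP/(_ e)/implyP E_unif /E_unif/eqP. Qed.

Lemma card_le_ex r n (T : finType) (H : hypergraph T) (E : hypergraph 'I_n) :
  uniform r E -> ~~ contains H E -> #|E| <= ex r n H.
Proof.
move=> E_unif E_free.
by apply: (@leq_bigmax_cond _ (fun E => uniform r E && ~~ contains H E)); rewrite E_unif.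
Qed.

Lemma dense_trace_embedding r n (T : finType) (H : hypergraph T) (E : hypergraph 'I_n)
    (S : {set 'I_n}) :
  uniform r E -> ex r #|S| H < #|trace E S| ->
  exists2 phi, phi \in embeddings H E & [set phi x | x in T] \subset S.
Proof.
move=> E_unif S_dense.
pose g : 'I_#|S| -> 'I_n := enum_val.
pose Eg := [set e : {set 'I_#|S|} | g @: e \in E].
have Eg_unif : uniform r Eg.
  apply/forallP => e; apply/implyP; rewrite inE => /(card_uniform E_unif).
  by rewrite (card_imset _ (@enum_val_inj _ _)) => ->.
have trace_le : #|trace E S| <= #|Eg|.
  have := leq_imset_card (fun e : {set 'I_#|S|} => g @: e) Eg.
  apply: leq_trans; apply: subset_leq_card.
  apply/subsetP => h; rewrite inE => /andP[hE hS].
  have h_img : h = g @: (g @^-1: h).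
    apply/setP => x; apply/idP/imsetP => [xh | [i + ->]]; last by rewrite inE.
    by exists (enum_rank_in (subsetP hS x xh) x); rewrite ?inE /g enum_rankK_in // (subsetP hS).
  by apply/imsetP; exists (g @^-1: h); rewrite // inE -h_img.
have : contains H Eg.
  by apply: contraLR S_dense => /(card_le_ex Eg_unif); rewrite -leqNgt; exact: leq_trans.
case/existsP => psi /andP[/injectiveP psi_inj /forallP psi_edge].
exists [ffun x => g (psi x)].
  rewrite inE; apply/andP; split.
    by apply/injectiveP => x y; rewrite !ffunE => /enum_val_inj /psi_inj.
  apply/forallP => e; apply/implyP => eH.
  have -> : [ffun x => g (psi x)] @: e = g @: (psi @: e).
    by rewrite -imset_comp; apply: eq_imset => x; rewrite ffunE.
  by have := psi_edge e; rewrite eH inE.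
by apply/subsetP => _ /imsetP[x _ ->]; rewrite ffunE; exact: enum_valP.
Qed.

Section AveragingOverSubsets.
Variables (r m n : nat) (T : finType) (H : hypergraph T) (E : hypergraph 'I_n).
Hypotheses (E_unif : uniform r E) (rm : r <= m) (vm : #|T| <= m) (mn : m <= n).

Let msets := [set S : {set 'I_n} | #|S| == m].
Let dense_msets := [set S in msets | ex r m H < #|trace E S|].

Lemma sum_card_trace : \sum_(S in msets) #|trace E S| = #|E| * 'C(n - r, m - r).
Proof.
rewrite (double_count msets E (fun S h => h \subset S)) -sum_nat_const.
apply: eq_bigr => h hE; rewrite -[n in 'C(n - _, _)]card_ord -(card_uniform E_unif hE).
rewrite -card_supsets ?(card_uniform E_unif hE) //.
by apply: eq_card => S; rewrite !inE andbC.
Qed.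

Lemma card_dense_msets_le : #|dense_msets| <= #|embeddings H E| * 'C(n - #|T|, m - #|T|).
Proof.
pose img (phi : {ffun T -> 'I_n}) := [set phi x | x in T].
apply: (@leq_trans (\sum_(S in dense_msets) #|[set phi in embeddings H E | img phi \subset S]|)).
  rewrite -sum1_card; apply: leq_sum => S; rewrite !inE => /andP[/eqP cS S_dense].
  have [|phi phi_emb phi_S] := @dense_trace_embedding _ _ _ H _ S E_unif; first by rewrite cS.
  by apply/card_gt0P; exists phi; rewrite inE phi_emb.
rewrite double_count -sum_nat_const; apply: leq_sum => phi.
rewrite inE => /andP[/injectiveP phi_inj _].
rewrite -[n in 'C(n - _, _)]card_ord -(card_imset _ phi_inj) -card_supsets ?card_imset //.
apply: subset_leq_card; apply/subsetP => S; rewrite !inE.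
by case/andP => /andP[-> _] ->.
Qed.

Lemma sum_card_trace_le :
  \sum_(S in msets) #|trace E S| <= #|dense_msets| * 'C(m, r) + 'C(n, m) * ex r m H.
Proof.
rewrite (bigID (fun S => ex r m H < #|trace E S|)) /= leq_add //.
  rewrite -sum_nat_cond_const; apply: leq_sum => S /andP[]; rewrite inE => /eqP cS _.
  rewrite -cS -cards_draws; apply: subset_leq_card; apply/subsetP => h.
  by rewrite !inE => /andP[hE ->]; rewrite (card_uniform E_unif hE) /=.
apply: (@leq_trans (\sum_(S in msets | ~~ (ex r m H < #|trace E S|)) ex r m H)).
  by apply: leq_sum => S /andP[_]; rewrite -leqNgt.
rewrite sum_nat_cond_const leq_mul2r -[n in 'C(n, m)]card_ord -card_draws.
by rewrite subset_leq_card ?orbT //; apply/subsetP => S; rewrite !inE => /andP[].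
Qed.

Variable R : realType.
Local Open Scope ring_scope.

Lemma card_dense_msets_ge (d : R) :
  ((ex r m H)%:R / 'C(m, r)%:R + d) * 'C(n, r)%:R <= #|E|%:R ->
  d * 'C(n, m)%:R <= #|dense_msets|%:R.
Proof.
move=> E_big; set x := (ex r m H)%:R / _ in E_big.
have Cmr_gt0 : 0 < 'C(m, r)%:R :> R by rewrite ltr0n bin_gt0.
have ex_x : (ex r m H)%:R = x * 'C(m, r)%:R by rewrite divfK ?gt_eqF.
have Cswap : 'C(n, r)%:R * 'C(n - r, m - r)%:R = 'C(n, m)%:R * 'C(m, r)%:R :> R.
  by rewrite -!natrM mul_bin_sub.
have trace_sum : #|E|%:R * 'C(n - r, m - r)%:R <=
    (#|dense_msets| * 'C(m, r) + 'C(n, m) * ex r m H)%:R :> R.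
  by rewrite -natrM -sum_card_trace ler_nat sum_card_trace_le.
rewrite natrD !natrM ex_x in trace_sum.
have := ler_wpM2r (ler0n R 'C(n - r, m - r)) E_big; rewrite -mulrA Cswap => E_big'.
by rewrite -(ler_pM2r Cmr_gt0); lra.
Qed.

Lemma card_embeddings_ge (d : R) :
  ((ex r m H)%:R / 'C(m, r)%:R + d) * 'C(n, r)%:R <= #|E|%:R ->
  d * 'C(n, #|T|)%:R <= #|embeddings H E|%:R * 'C(m, #|T|)%:R.
Proof.
move=> /card_dense_msets_ge dense_big.
have emb_big : d * 'C(n, m)%:R <= #|embeddings H E|%:R * 'C(n - #|T|, m - #|T|)%:R.
  by apply: le_trans dense_big _; rewrite -natrM ler_nat card_dense_msets_le.
have Cnvmv_gt0 : 0 < 'C(n - #|T|, m - #|T|)%:R :> R by rewrite ltr0n bin_gt0 leq_sub2r.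
have Cswap : 'C(n, m)%:R * 'C(m, #|T|)%:R =
             'C(n, #|T|)%:R * 'C(n - #|T|, m - #|T|)%:R :> R.
  by rewrite -!natrM mul_bin_sub.
rewrite -(ler_pM2r Cnvmv_gt0) -mulrA -Cswap mulrA [_ * 'C(m, _)%:R * _]mulrAC.
by rewrite ler_wpM2r.
Qed.

End AveragingOverSubsets.

Section ProperColoring.
Variables (V : finType) (G : hypergraph V) (k : nat) (col : V -> 'I_k).
Hypotheses (G_graph : is_graph G)
           (col_proper : forall u v, [set u; v] \in G -> col u != col v).

Let proper_edge e : e \in G -> exists u w, e = [set u; w] /\ col u != col w.
Proof.
move=> eG; have /cards2P[u [w [_ e_uw]]] := implyP (forallP G_graph e) eG.
by exists u, w; split=> //; apply: col_proper; rewrite -e_uw.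
Qed.

Lemma proper_coloring_edge e : e \in G -> col @: e \in complete_graph k.
Proof.
by case/proper_edge=> u [w [-> col_uw]]; rewrite inE imsetU1 imset_set1 cards2 col_uw.
Qed.

Lemma proper_coloring_inj e : e \in G -> {in e &, injective col}.
Proof.
case/proper_edge=> u [w [-> col_uw]] a b; rewrite !inE.
by move=> /orP[]/eqP-> /orP[]/eqP-> // /eqP; rewrite ?(negbTE col_uw) // eq_sym (negbTE col_uw).
Qed.

End ProperColoring.

Section ExpansionMap.
Variables (V W : finType) (G : hypergraph V) (G' : hypergraph W) (r : nat) (c : V -> W).
Hypothesis c_edge : forall e, e \in G -> c @: e \in G'.

Definition expansion_map (a : exp_vertex G r) : exp_vertex G' r :=
  match a with
  | inl u => inl (c u)
  | inr (e, i) => inr (exist _ (c @: val e) (c_edge (valP e)), i)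
  end.

Lemma expansion_map_edge e : e \in expansion r G -> expansion_map @: e \in expansion r G'.
Proof.
case/imsetP => e0 _ ->; apply/imsetP; exists (exist _ (c @: val e0) (c_edge (valP e0))) => //.
by rewrite imsetU -!imset_comp; congr (_ :|: _); apply: eq_imset.
Qed.

Hypothesis c_inj : forall e, e \in G -> {in e &, injective c}.

Lemma expansion_map_inj e : e \in expansion r G -> {in e &, injective expansion_map}.
Proof.
case/imsetP => e0 _ -> a b.
rewrite !inE => /orP[/imsetP[u ue0 ->] | /imsetP[i _ ->]].
  by case/orP=> /imsetP[w we0 ->] // [/(c_inj (valP e0) ue0 we0) ->].
by case/orP=> /imsetP[j _ ->] // [->].
Qed.

End ExpansionMap.

Lemma box_extend n (W : finType) (T : W -> {set 'I_n}) (g : W -> option 'I_n) :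
  (forall w, T w != set0) -> (forall w z, g w = Some z -> z \in T w) ->
  exists2 phi : {ffun W -> 'I_n},
    forall w, phi w \in T w & forall w z, g w = Some z -> phi w = z.
Proof.
move=> T_n0 g_T.
suff /fin_all_exists[phi phi_spec] :
    forall w, exists y, y \in T w /\ forall z, g w = Some z -> y = z.
  by exists (finfun phi) => w; rewrite ffunE; case: (phi_spec w) => // _; apply.
move=> w; case gw: (g w) => [z|].
  by exists z; split=> [|_ [//]]; exact: g_T gw.
by have /set0Pn[z zT] := T_n0 w; exists z.
Qed.

Section BlowUp.
Variables (V W : finType) (H1 : hypergraph V) (H2 : hypergraph W) (s : V -> W).
Variables (n : nat) (E : hypergraph 'I_n) (T : W -> {set 'I_n}).
Hypotheses (s_edge : forall e, e \in H1 -> s @: e \in H2)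
           (s_inj : forall e, e \in H1 -> {in e &, injective s}).
Hypotheses (T_big : forall w, #|V| < #|T w|)
           (T_emb : forall phi : {ffun W -> 'I_n},
              (forall w, phi w \in T w) -> phi \in embeddings H2 E).

Let T_n0 w : T w != set0.
Proof. by rewrite -card_gt0; apply: leq_ltn_trans (T_big w). Qed.

Lemma box_disjoint x y z : z \in T x -> z \in T y -> x = y.
Proof.
move=> zx zy; pose g w := if (w == x) || (w == y) then Some z else None.
have [|phi phi_T phi_g] := @box_extend _ _ T g T_n0.
  by move=> w z'; rewrite /g; case: ifP => // /orP[]/eqP-> [<-].
have := T_emb phi_T; rewrite inE => /andP[/injectiveP phi_inj _].
by apply: phi_inj; rewrite (phi_g x z) ?(phi_g y z) // /g eqxx ?orbT.
Qed.

Lemma exists_box_injection : exists2 Phi : V -> 'I_n, injective Phi & forall a, Phi a \in T (s a).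
Proof.
(* Phi a is the (enum_rank a)-th point of T (s a); the sets T w are pairwise
   disjoint by box_disjoint. *)
have /fin_all_exists[Phi Phi_spec] : forall a, exists z,
    z \in T (s a) /\ index z (enum (T (s a))) = enum_rank a.
  move=> a; have /set0Pn[z0 _] := T_n0 (s a).
  exists (nth z0 (enum (T (s a))) (enum_rank a)).
  have rank_lt : enum_rank a < size (enum (T (s a))).
    by rewrite -cardE (leq_trans (ltn_ord _) (ltnW (T_big _))).
  by rewrite -mem_enum mem_nth // index_uniq ?enum_uniq.
exists Phi => [a b Phi_ab | a]; last by case: (Phi_spec a).
have [Phi_a rank_a] := Phi_spec a; have [Phi_b rank_b] := Phi_spec b.
have sab : s a = s b by apply: box_disjoint Phi_a _; rewrite Phi_ab.
by apply: enum_rank_inj; apply: val_inj; rewrite /= -rank_a -rank_b Phi_ab sab.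
Qed.

Lemma blowup_contains : contains H1 E.
Proof.
have [Phi Phi_inj Phi_T] := exists_box_injection.
apply/existsP; exists (finfun Phi); apply/andP; split.
  by apply/injectiveP => a b; rewrite !ffunE => /Phi_inj.
apply/forallP => e; apply/implyP => eH1.
pose g w := omap Phi [pick a in e | s a == w].
have [|phi phi_T phi_g] := @box_extend _ _ T g T_n0.
  by move=> w z; rewrite /g; case: pickP => [a /andP[_ /eqP <-] [<-] | _ //]; exact: Phi_T.
have := T_emb phi_T; rewrite inE => /andP[_ /forallP /(_ (s @: e))].
rewrite s_edge //= -imset_comp; congr (_ \in E); apply: eq_in_imset => a ae /=.
rewrite ffunE; apply: phi_g; rewrite /g.
case: pickP => [b /andP[be /eqP sba] | /(_ a)]; last by rewrite ae eqxx.
by rewrite (s_inj eH1 be ae sba).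
Qed.

End BlowUp.

Lemma card_exp_vertex_le (V : finType) (G : hypergraph V) r :
  #|exp_vertex G r| <= #|V| + 2 ^ #|V| * (r - 2).
Proof.
rewrite card_sum card_prod card_sig card_ord leq_add2l leq_mul2r; apply/orP; right.
rewrite -cardsT -card_powerset; apply: subset_leq_card; apply/subsetP => e.
by rewrite powersetE inE subsetT.
Qed.

Local Open Scope ring_scope.

Section NearInfimum.
Import classical_sets.
Local Open Scope classical_set_scope.

Lemma exists_near_inf_index (R : realType) (a : nat -> R) (d : R) (m0 : nat) :
  0 < d -> (forall n, 0 <= a n) ->
  exists2 m, (m0 <= m)%N & forall n, (m <= n)%N -> a m - d <= a n.
Proof.
move=> d_gt0 a_ge0.
pose A := [set a n | n in [set n | (m0 <= n)%N]].
have A_lb : has_lbound A by exists 0 => _ [n _ <-].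
have A_inf : has_inf A by split=> //; exists (a m0); apply: imageP; rewrite /= leqnn.
have [_ [m m0m <-] am_lt] := inf_adherent d_gt0 A_inf.
exists m => // n mn.
have : A (a n) by apply: imageP; exact: leq_trans mn.
move/(ge_inf A_lb); lra.
Qed.

End NearInfimum.

Lemma supersaturation (R : realType) r (T : finType) (H : hypergraph T) (eps : R) :
  0 < eps ->
  exists2 c : R, 0 < c & exists n1, forall n, (n1 <= n)%N ->
    forall E : hypergraph 'I_n, uniform r E ->
      (ex r n H)%:R + eps * n%:R ^+ r <= #|E|%:R ->
      c * n%:R ^+ #|T| <= #|embeddings H E|%:R.
Proof.
move=> eps_gt0; set v := #|T|; set d := eps / 2.
have d_gt0 : 0 < d by rewrite divr_gt0.
pose density j : R := (ex r j H)%:R / 'C(j, r)%:R.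
have density_ge0 j : 0 <= density j by rewrite divr_ge0.
(* Past m the density never drops more than d below its value at m, so an
   excess of eps n^r edges over ex(n, H) beats the density at m by d 'C(n, r). *)
have [m] := exists_near_inf_index (maxn v r) d_gt0 density_ge0.
rewrite geq_max => /andP[vm rm] near_inf.
pose K := (2 ^ v * (v`! * 'C(m, v)))%N.
have K_gt0 : 0 < K%:R :> R by rewrite ltr0n !muln_gt0 expn_gt0 fact_gt0 bin_gt0.
exists (d / K%:R); first by rewrite divr_gt0.
exists (maxn m (2 * v).+1) => n; rewrite geq_max => /andP[mn vn] E E_unif E_big.
have Cnr_gt0 : 0 < 'C(n, r)%:R :> R by rewrite ltr0n bin_gt0 (leq_trans rm mn).
have E_big' : (density m + d) * 'C(n, r)%:R <= #|E|%:R.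
  apply: le_trans E_big.
  have ex_n : (ex r n H)%:R = density n * 'C(n, r)%:R by rewrite divfK ?gt_eqF.
  have Cnr_le : 'C(n, r)%:R <= n%:R ^+ r :> R by rewrite -natrX ler_nat bin_leq_expn.
  have := near_inf n mn; rewrite ex_n /d; nra.
have emb_big := card_embeddings_ge E_unif rm vm mn E_big'; rewrite -/v in emb_big.
have nv_le : n%:R ^+ v <= (2 ^ v * (v`! * 'C(n, v)))%:R :> R.
  by rewrite -natrX ler_nat expn_leq_bin.
rewrite mulrAC ler_pdivrMr // /K !natrM natrX in nv_le *.
have := ler_wpM2l (ltW d_gt0) nv_le.
have fact_ge0 : 0 <= 2 ^+ v * v`!%:R :> R by rewrite mulr_ge0 ?exprn_ge0.
have := ler_wpM2l fact_ge0 emb_big; lra.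
Qed.

Lemma ex_lt (R : realType) r n (T : finType) (H : hypergraph T) (B : R) :
  0 < B -> (forall E : hypergraph 'I_n, uniform r E -> B <= #|E|%:R -> contains H E) ->
  (ex r n H)%:R < B.
Proof.
move=> B_gt0 dense_contains; rewrite /ex.
pose free (E : hypergraph 'I_n) := uniform r E && ~~ contains H E.
have [E0 E0_free | no_free] := pickP free; last by rewrite big_pred0.
have [|E /andP[E_unif E_free] ->] := @eq_bigmax_cond _ free (fun E => #|E|).
  by apply/card_gt0P; exists E0.
by rewrite ltNge; apply: contra E_free; exact: dense_contains.
Qed.

Lemma exists_rich_column (R : realType) (I J : finType) (A : {set I}) (B : {set J})
    (P : I -> J -> bool) (a : R) :
  A != set0 -> (forall j, j \in B -> a * #|A|%:R <= #|[set i in A | P i j]|%:R) ->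
  exists2 i, i \in A & a * #|B|%:R <= #|[set j in B | P i j]|%:R.
Proof.
move=> /set0Pn[i0 i0A] rich_rows.
pose col i := #|[set j in B | P i j]|.
have [i iA col_max] := @arg_maxnP _ i0 (mem A) col i0A.
exists i => //.
have rows_le : #|B|%:R * (a * #|A|%:R) <= (\sum_(i in A) col i)%:R.
  by rewrite mulr_natl -sumr_const double_count natr_sum; apply: ler_sum.
have cols_le : (\sum_(i' in A) col i')%:R <= #|A|%:R * (col i)%:R :> R.
  by rewrite -natrM ler_nat -sum_nat_const; apply: leq_sum.
have A_gt0 : 0 < #|A|%:R :> R by rewrite ltr0n; apply/card_gt0P; exists i0.
rewrite -(ler_pM2l A_gt0); apply: le_trans cols_le; apply: le_trans rows_le.
lra.
Qed.

Lemma greedy_common_subset (R : realType) (Y : finType) (n j : nat)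
    (N : Y -> {set 'I_n}) (B : {set Y}) (a : R) :
  0 <= a -> (j <= n)%N -> (forall y, y \in B -> j%:R + a * n%:R <= #|N y|%:R) ->
  exists X : {set 'I_n}, exists B' : {set Y},
    [/\ #|X| = j, B' \subset B, (forall y, y \in B' -> X \subset N y) &
        a ^+ j * #|B|%:R <= #|B'|%:R].
Proof.
move=> a_ge0; elim: j => [|j IH] jn N_big.
  by exists set0, B; rewrite cards0 expr0 mul1r; split=> // y _; apply: sub0set.
have [|X [B' [cX B'B X_sub B'_big]]] := IH (ltnW jn).
  move=> y /N_big; apply: le_trans; rewrite lerD2r ler_nat; exact: leqnSn.
have cXC : #|~: X| = (n - j)%N by rewrite cardsCs setCK card_ord cX.
have XC_n0 : ~: X != set0 by rewrite -card_gt0 cXC subn_gt0.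
have [|x xX x_rich] := @exists_rich_column _ _ _ (~: X) B' (fun x y => x \in N y) a XC_n0.
  move=> y yB'; have := N_big y (subsetP B'B y yB').
  have : (#|N y| <= #|[set x in ~: X | x \in N y]| + j)%N.
    rewrite -cX -(cardsID X (N y)) addnC leq_add ?subset_leq_card ?subsetIr //.
    by apply/subsetP => z; rewrite !inE => /andP[-> ->].
  rewrite -(ler_nat R) natrD cXC => h1 h2; apply: le_trans (_ : a * n%:R <= _).
    by rewrite ler_wpM2l // ler_nat leq_subr.
  by move: h2; rewrite -natr1; lra.
exists (x |: X), [set y in B' | x \in N y]; split.
- by rewrite cardsU1 -in_setC xX cX.
- by apply: subset_trans B'B; apply/subsetP => y; rewrite inE => /andP[].
- move=> y; rewrite inE => /andP[yB' xNy]; rewrite subUset sub1set xNy.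
  exact: X_sub.
- by apply: le_trans x_rich; rewrite exprSr -mulrA mulrCA ler_wpM2l.
Qed.

Definition fiber (T : finType) v (A : {set v.+1.-tuple T}) (tp : v.-tuple T) : {set T} :=
  [set x | [tuple of x :: tp] \in A].

Lemma card_fibers (T : finType) v (A : {set v.+1.-tuple T}) :
  #|A| = (\sum_(tp : v.-tuple T) #|fiber A tp|)%N.
Proof.
rewrite -sum1_card (reindex (fun p : v.-tuple T * T => [tuple of p.2 :: p.1])) /=.
  by under [RHS]eq_bigr do rewrite -sum1dep_card; rewrite pair_big_dep.
exists (fun tp : v.+1.-tuple T => ([tuple of behead tp], thead tp)) => [[tp x] _ | tp _] /=.
  by rewrite theadE; congr (_, _); apply: val_inj.
by rewrite [RHS]tuple_eta.
Qed.

Lemma card_rich_fibers (R : realType) n v (c : R) (A : {set v.+1.-tuple 'I_n}) :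
  0 <= c -> (0 < n)%N -> c * n%:R ^+ v.+1 <= #|A|%:R ->
  c / 2 * n%:R ^+ v <= #|[set tp | c * n%:R / 2 <= #|fiber A tp|%:R]|%:R.
Proof.
move=> c_ge0 n_gt0 A_big; set rich := [set tp | _].
have fiber_le tp :
    #|fiber A tp|%:R <= (if tp \in rich then n%:R else 0) + c * n%:R / 2 :> R.
  rewrite inE; case: ifP => [_ | /negbT]; last by rewrite -ltNge add0r => /ltW.
  have : (#|fiber A tp| <= n)%N by rewrite -[n in (_ <= n)%N]card_ord max_card.
  by rewrite -(ler_nat R) => /le_trans; apply; rewrite lerDl; rewrite divr_ge0 ?mulr_ge0.
have sum_le : #|A|%:R <=
    \sum_(tp : v.-tuple 'I_n) ((if tp \in rich then n%:R else 0) + c * n%:R / 2).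
  by rewrite card_fibers natr_sum; apply: ler_sum => tp _; exact: fiber_le.
rewrite big_split /= -big_mkcond /= !sumr_const card_tuple card_ord in sum_le.
rewrite -[_ *+ #|rich|]mulr_natl -[_ *+ (n ^ v)%N]mulr_natl natrX in sum_le.
have n_pos : 0 < n%:R :> R by rewrite ltr0n.
rewrite -(ler_pM2r n_pos); move: A_big sum_le; rewrite exprSr; lra.
Qed.

Lemma box_cons (U : finType) v (A : {set v.+1.-tuple U}) (B : {set v.-tuple U})
    (X : {set U}) (T : 'I_v -> {set U}) :
  (forall tp, tp \in B -> X \subset fiber A tp) ->
  (forall tp, (forall i, tnth tp i \in T i) -> tp \in B) ->
  forall tp : v.+1.-tuple U,
    thead tp \in X -> (forall i, tnth tp (lift ord0 i) \in T i) -> tp \in A.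
Proof.
move=> X_fib T_box tp tp0 tp_box; rewrite [tp]tuple_eta.
have : [tuple of behead tp] \in B.
  apply: T_box => i; rewrite tnth_behead.
  have -> : inord i.+1 = lift ord0 i by apply: val_inj; rewrite /= inordK ?lift0 ?ltnS.
  exact: tp_box.
by move/X_fib/subsetP/(_ (thead tp) tp0); rewrite inE.
Qed.

Lemma dense_tuples_box (R : realType) (t v : nat) (c : R) : 0 < c ->
  exists N, forall n, (N <= n)%N -> forall A : {set v.-tuple 'I_n},
    c * n%:R ^+ v <= #|A|%:R ->
    exists2 T : 'I_v -> {set 'I_n}, (forall i, t <= #|T i|)%N &
      forall tp : v.-tuple 'I_n, (forall i, tnth tp i \in T i) -> tp \in A.
Proof.
(* Many tails tp have a fiber of size >= c n / 2; greedily choose t points X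
   common to the fibers of a (c/4)^t-fraction B' of them and recurse on B'. *)
elim: v c => [|v IH] c c_gt0.
  exists 0%N => n _ A; rewrite expr0 mulr1 => A_big; exists (fun=> set0) => [[]//|tp _].
  have /card_gt0P[tp0 tp0A] : (0 < #|A|)%N by rewrite -(ltr_nat R); apply: lt_le_trans A_big.
  by rewrite tuple0 -(tuple0 tp0).
pose c' := (c / 4) ^+ t * (c / 2).
have [|N' box'] := IH c'; first by rewrite mulr_gt0 ?exprn_gt0 ?divr_gt0.
exists (maxn N' (maxn t (Num.bound (4 * t%:R / c)))) => n.
rewrite !geq_max => /and3P[N'n tn bound_n] A A_big.
have c_ge0 := ltW c_gt0.
have bound_ge0 : 0 <= 4 * t%:R / c by rewrite divr_ge0 ?mulr_ge0.
have t_small : 4 * t%:R / c < n%:R.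
  by apply: lt_le_trans (archi_boundP bound_ge0) _; rewrite ler_nat.
have n_gt0 : (0 < n)%N by rewrite -(ltr_nat R); apply: le_lt_trans t_small.
have := card_rich_fibers c_ge0 n_gt0 A_big; set rich := [set tp | _] => rich_big.
have [|X [B' [cX B'rich X_fib B'_big]]] :=
  @greedy_common_subset R _ n t (fiber A) rich (c / 4) (divr_ge0 c_ge0 (ler0n _ 4)) tn.
  move=> tp; rewrite inE; apply: le_trans.
  by move: t_small; rewrite ltr_pdivrMr // => ?; lra.
have [|T' T'_big T'_box] := box' n N'n B'.
  by apply: le_trans B'_big; rewrite -mulrA ler_wpM2l ?exprn_ge0 ?divr_ge0.
exists (fun i => if unlift ord0 i is Some i' then T' i' else X).
  by move=> i; case: unlift => [i'|] //; rewrite cX.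
move=> tp tp_box; apply: (box_cons X_fib T'_box).
  by have := tp_box ord0; rewrite unlift_none.
by move=> i; have := tp_box (lift ord0 i); rewrite liftK.
Qed.

Lemma dense_ffun_box (R : realType) (V : finType) (t : nat) (c : R) : 0 < c ->
  exists N, forall n, (N <= n)%N -> forall A : {set {ffun V -> 'I_n}},
    c * n%:R ^+ #|V| <= #|A|%:R ->
    exists2 T : V -> {set 'I_n}, (forall x, t <= #|T x|)%N &
      forall phi : {ffun V -> 'I_n}, (forall x, phi x \in T x) -> phi \in A.
Proof.
move=> c_gt0; have [N box] := dense_tuples_box t #|V| c_gt0.
exists N => n Nn A A_big.
have [|T T_big T_box] := box n Nn (Finfun @^-1: A).
  rewrite on_card_preimset //; apply: onW_bij; exists fgraph; [exact: FinfunK | exact: fgraphK].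
exists (fun x => T (enum_rank x)) => [x | phi phi_box]; first exact: T_big.
rewrite -[phi]fgraphK; have := T_box (fgraph phi); rewrite inE; apply => i.
by rewrite tnth_fgraph -[i in T i]enum_valK.
Qed.

Theorem lemma3p1 (R : realType) (k r f : nat) (eps : R) :
  (2 <= r)%N -> (r < k)%N -> 0 < eps ->
  exists n0 : nat,
    forall (F : hypergraph 'I_f),
      is_graph F -> chromatic_number_is F k ->
      forall n : nat, (n0 <= n)%N ->
        (ex r n (expansion r F))%:R <
          (ex r n (expansion r (complete_graph k)))%:R + eps * n%:R ^+ r.
Proof.
move=> _ _ eps_gt0; set K := complete_graph k.
have [c c_gt0 [n1 emb_dense]] := supersaturation r (expansion r K) eps_gt0.
have [N box] := dense_ffun_box (exp_vertex K r) (f + 2 ^ f * (r - 2)).+1 c_gt0.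
exists (maxn 1 (maxn n1 N)) => F F_graph [[col col_proper] _] n.
rewrite !geq_max => /and3P[n_gt0 n1n Nn].
apply: ex_lt => [|E E_unif E_big].
  by rewrite ltr_wpDl // mulr_gt0 // exprn_gt0 // ltr0n.
have [T T_big T_emb] := box n Nn _ (emb_dense n n1n E E_unif E_big).
pose s : exp_vertex F r -> exp_vertex K r :=
  expansion_map (r := r) (proper_coloring_edge F_graph col_proper).
apply: (@blowup_contains _ _ _ _ s _ _ T _ _ _ T_emb).
- exact: expansion_map_edge.
- exact: expansion_map_inj (proper_coloring_inj F_graph col_proper).
- move=> x; apply: leq_trans (T_big x); rewrite ltnS.
  by have := card_exp_vertex_le F r; rewrite card_ord.
Qed.
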